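(* Let $(G,\Lambda)$ be a pseudo free self-similar action and $x\in\Lambda^\infty$. Then $x$ is $G$-periodic if and only if $\sigma^n(x)$ is $G$-periodic for every $n\in\mathbb{N}^k$.
   Context: Let $k\ge1$. A $k$-graph is a countable small category $\Lambda$ together with a functor $d:\Lambda\to\mathbb{N}^k$ (the degree map) with the unique factorization property: for every $\mu\in\Lambda$ and $m,n\in\mathbb{N}^k$ with $d(\mu)=m+n$ there are unique $\alpha,\beta\in\Lambda$ with $d(\alpha)=m$, $d(\beta)=n$ and $\mu=\alpha\beta$. Write $\Lambda^n=d^{-1}(n)$; $\Lambda^0$ is identified with the set of objects (vertices), and $r,s$ denote range and source. All $k$-graphs are assumed row-finite and source-free. Infinite paths: let $\Omega_k=\{(p,q)\in\mathbb{N}^k\times\mathbb{N}^k:p\le q\}$ with $r(p,q)=(p,p)$, $s(p,q)=(q,q)$, $(p,q)(q,m)=(p,m)$, $d(p,q)=q-p$. An infinite path is a degree-preserving functor $x:\Omega_k\to\Lambda$; $\Lambda^\infty$ is the set of infinite paths, and the shift is $\sigma^n(x)(p,q)=x(p+n,q+n)$. Self-similar actions: $G$ is a countable discrete group. A self-similar action $(G,\Lambda)$ consists of an action of $G$ on $\Lambda$ by automorphisms (bijections preserving $d$, $r$, $s$), written $g\cdot\mu$, and a restriction map $G\times\Lambda\to G$, $(g,\mu)\mapsto g|_\mu$, such that for all $g,h\in G$, $v\in\Lambda^0$ and $\mu,\nu$ with $s(\mu)=r(\nu)$: $g\cdot(\mu\nu)=(g\cdot\mu)(g|_\mu\cdot\nu)$;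 $g|_v=g$; $g|_{\mu\nu}=(g|_\mu)|_\nu$; $1_G|_\mu=1_G$; $(gh)|_\mu=g|_{h\cdot\mu}\,h|_\mu$. For $x\in\Lambda^\infty$, $(g\cdot x)(p,q)=g|_{x(0,p)}\cdot x(p,q)$. The action is pseudo free if $g\cdot\mu=\mu$ and $g|_\mu=1_G$ for some $\mu\in\Lambda$ imply $g=1_G$. $G$-aperiodicity: an infinite path $x$ is $G$-aperiodic if for all $g\in G$ and $p,q\in\mathbb{N}^k$ with $g\neq1_G$ or $p\neq q$ one has $\sigma^p(x)\neq g\cdot\sigma^q(x)$; otherwise $x$ is $G$-periodic. *)

From HB Require Import structures.
From mathcomp Require Import all_boot.
Set Implicit Arguments.
Unset Strict Implicit.
Unset Printing Implicit Defensive.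

Definition degk (k : nat) := {ffun 'I_k -> nat}.
Definition dzero (k : nat) : degk k := [ffun _ => 0].
Definition dadd (k : nat) (m n : degk k) : degk k := [ffun i => m i + n i].
Definition dsub (k : nat) (m n : degk k) : degk k := [ffun i => m i - n i].
Definition dle (k : nat) (m n : degk k) : bool := [forall i, m i <= n i].

(* ---------- k-graphs (arrows-only presentation of a small category) ----------
   Objects (vertices) are identified with identity morphisms: r and s return
   identity morphisms, and [comp] is total but only meaningful on composable
   pairs (s mu = r nu). *)
Record kgraph (k : nat) := KGraph {
  kpath :> countType;
  kr : kpath -> kpath;
  ks : kpath -> kpath;
  kcomp : kpath -> kpath -> kpath;
  kd : kpath -> degk k;
  kr_r : forall mu, kr (kr mu) = kr mu;
  ks_r : forall mu, ks (kr mu) = kr mu;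
  kr_s : forall mu, kr (ks mu) = ks mu;
  ks_s : forall mu, ks (ks mu) = ks mu;
  kr_comp : forall mu nu, ks mu = kr nu -> kr (kcomp mu nu) = kr mu;
  ks_comp : forall mu nu, ks mu = kr nu -> ks (kcomp mu nu) = ks nu;
  kcomp_idl : forall mu, kcomp (kr mu) mu = mu;
  kcomp_idr : forall mu, kcomp mu (ks mu) = mu;
  kcompA : forall mu nu eta, ks mu = kr nu -> ks nu = kr eta ->
     kcomp (kcomp mu nu) eta = kcomp mu (kcomp nu eta);
  kd_id : forall mu, kd (kr mu) = dzero k;
  kd_comp : forall mu nu, ks mu = kr nu -> kd (kcomp mu nu) = dadd (kd mu) (kd nu);
  kufp : forall mu m n, kd mu = dadd m n ->
     exists ab : kpath * kpath,
       [/\ kd ab.1 = m, kd ab.2 = n, ks ab.1 = kr ab.2 & mu = kcomp ab.1 ab.2] /\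
       forall a b, kd a = m -> kd b = n -> ks a = kr b -> mu = kcomp a b ->
         a = ab.1 /\ b = ab.2;
  krow_finite : forall v n, exists l : seq kpath,
     forall lam, kr lam = v -> kd lam = n -> lam \in l;
  ksource_free : forall v n, kr v = v -> exists lam, kr lam = v /\ kd lam = n
}.

Arguments kr {k L} : rename.
Arguments ks {k L} : rename.
Arguments kcomp {k L} : rename.
Arguments kd {k L} : rename.

Definition is_vertex k (L : kgraph k) (v : L) := kr v = v.

(* ---------- infinite paths: degree-preserving functors Omega_k -> Lambda ----
   Represented by their action on morphisms (p,q), p <= q; values at p > q are
   irrelevant. *)
Definition inf_path k (L : kgraph k) := degk k -> degk k -> L.

Definition is_inf_path k (L : kgraph k) (x : inf_path L) : Prop :=
  [/\ (forall p q, dle p q -> kd (x p q) = dsub q p),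
      (forall p q, dle p q -> kr (x p q) = x p p /\ ks (x p q) = x q q),
      (forall p, is_vertex (x p p)) &
      (forall p q m, dle p q -> dle q m -> x p m = kcomp (x p q) (x q m))].

Definition ip_eq k (L : kgraph k) (x y : inf_path L) : Prop :=
  forall p q, dle p q -> x p q = y p q.

Definition shift k (L : kgraph k) (n : degk k) (x : inf_path L) : inf_path L :=
  fun p q => x (dadd p n) (dadd q n).

Record group := Group {
  gcar :> countType;
  gmul : gcar -> gcar -> gcar;
  gone : gcar;
  ginv : gcar -> gcar;
  gmulA : forall a b c, gmul a (gmul b c) = gmul (gmul a b) c;
  gmul1g : forall a, gmul gone a = a;
  gmulg1 : forall a, gmul a gone = a;
  gmulVg : forall a, gmul (ginv a) a = gone;
  gmulgV : forall a, gmul a (ginv a) = gone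
}.
Arguments gmul {G} : rename.
Arguments gone {G} : rename.

Record selfsim k (G : group) (L : kgraph k) := SelfSim {
  act : G -> L -> L;
  res : G -> L -> G;
  act1 : forall mu, act gone mu = mu;
  actM : forall g h mu, act (gmul g h) mu = act g (act h mu);
  act_bij : forall g, bijective (act g);
  act_d : forall g mu, kd (act g mu) = kd mu;
  act_r : forall g mu, kr (act g mu) = act g (kr mu);
  act_s : forall g mu, ks (act g mu) = act g (ks mu);
  act_comp : forall g mu nu, ks mu = kr nu ->
     act g (kcomp mu nu) = kcomp (act g mu) (act (res g mu) nu);
  res_vertex : forall g v, is_vertex v -> res g v = g;
  res_comp : forall g mu nu, ks mu = kr nu ->
     res g (kcomp mu nu) = res (res g mu) nu;
  res1 : forall mu, res gone mu = gone;
  resM : forall g h mu, res (gmul g h) mu = gmul (res g (act h mu)) (res h mu)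
}.

Arguments act {k G L} : rename.
Arguments res {k G L} : rename.

Definition pseudo_free k (G : group) (L : kgraph k) (A : selfsim G L) : Prop :=
  forall g mu, act A g mu = mu -> res A g mu = gone -> g = gone.

Definition act_inf k (G : group) (L : kgraph k) (A : selfsim G L)
  (g : G) (x : inf_path L) : inf_path L :=
  fun p q => act A (res A g (x (dzero k) p)) (x p q).

Definition G_aperiodic k (G : group) (L : kgraph k) (A : selfsim G L)
  (x : inf_path L) : Prop :=
  forall (g : G) (p q : degk k), (g <> gone \/ p <> q) ->
    ~ ip_eq (shift p x) (act_inf A g (shift q x)).

Definition G_periodic k (G : group) (L : kgraph k) (A : selfsim G L)
  (x : inf_path L) : Prop := ~ G_aperiodic A x.

From mathcomp Require Import all_boot.
From Stdlib Require Import FunctionalExtensionality.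

Set Implicit Arguments.
Unset Strict Implicit.

(* Shifting commutes with the action up to restriction:
   sigma^n (g . y) = g|_{y(0,n)} . sigma^n y.  Hence a relation
   sigma^p x = g . sigma^q x survives every further shift by n, with g
   replaced by h = g|_{x(q,q+n)}.  When p = q and g <> 1, the relation at
   (0,n) says g fixes x(p,p+n), so pseudo-freeness forces h <> 1.  The
   converse is the case n = 0. *)

Section Degrees.
Variable k : nat.
Implicit Types a b c : degk k.

Lemma daddC a b : dadd a b = dadd b a.
Proof. by apply/ffunP=> i; rewrite !ffunE addnC. Qed.

Lemma daddA a b c : dadd a (dadd b c) = dadd (dadd a b) c.
Proof. by apply/ffunP=> i; rewrite !ffunE addnA. Qed.

Lemma dadd0l a : dadd (dzero k) a = a.
Proof. by apply/ffunP=> i; rewrite !ffunE. Qed.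

Lemma dadd0r a : dadd a (dzero k) = a.
Proof. by apply/ffunP=> i; rewrite !ffunE addn0. Qed.

Lemma dsub_add2r a b c : dsub (dadd b c) (dadd a c) = dsub b a.
Proof. by apply/ffunP=> i; rewrite !ffunE subnDr. Qed.

Lemma dle_add2r a b c : dle a b -> dle (dadd a c) (dadd b c).
Proof. by move=> /forallP le_ab; apply/forallP=> i; rewrite !ffunE leq_add2r. Qed.

Lemma dle0 a : dle (dzero k) a.
Proof. by apply/forallP=> i; rewrite ffunE. Qed.

Lemma dle_addl a b : dle b (dadd a b).
Proof. by apply/forallP=> i; rewrite ffunE leq_addl. Qed.

End Degrees.

Section Shift.
Variables (k : nat) (L : kgraph k).
Implicit Types (x y : inf_path L) (m n : degk k).

Lemma shift0 x : shift (dzero k) x = x.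
Proof.
by apply: functional_extensionality => p; apply: functional_extensionality => q;
  rewrite /shift !dadd0r.
Qed.

Lemma shift_shift m n x : shift m (shift n x) = shift (dadd m n) x.
Proof.
by apply: functional_extensionality => p; apply: functional_extensionality => q;
  rewrite /shift -!daddA.
Qed.

Lemma shiftC m n x : shift m (shift n x) = shift n (shift m x).
Proof. by rewrite !shift_shift daddC. Qed.

Lemma ip_eq_shift n x y : ip_eq x y -> ip_eq (shift n x) (shift n y).
Proof. by move=> eq_xy p q le_pq; apply/eq_xy/dle_add2r. Qed.

Lemma is_inf_path_shift n x : is_inf_path x -> is_inf_path (shift n x).
Proof.
case=> x_d x_rs x_v x_comp; split=> [p q le_pq | p q le_pq | p | p q m le_pq le_qm].
- by rewrite /shift x_d ?dsub_add2r ?dle_add2r.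
- exact/x_rs/dle_add2r.
- exact: x_v.
- by apply: x_comp; apply: dle_add2r.
Qed.

End Shift.

Section SelfSimilarShift.
Variables (k : nat) (G : group) (L : kgraph k) (A : selfsim G L).
Implicit Types (x y : inf_path L) (n : degk k) (g : G).

Lemma shift_act_inf g n y : is_inf_path y ->
  ip_eq (shift n (act_inf A g y))
        (act_inf A (res A g (y (dzero k) n)) (shift n y)).
Proof.
case=> _ y_rs _ y_comp a b _; rewrite /shift /act_inf dadd0l; congr (act A _ _).
have le_0n := dle0 n.
have le_n_an := dle_addl a n.
rewrite (y_comp _ _ _ le_0n le_n_an) (res_comp A) //.
by rewrite (y_rs _ _ le_0n).2 (y_rs _ _ le_n_an).1.
Qed.

Lemma act_inf_fixed_res_eq1 g n y : pseudo_free A -> is_inf_path y ->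
  ip_eq y (act_inf A g y) -> res A g (y (dzero k) n) = gone -> g = gone.
Proof.
move=> pfA [_ _ y_v _] y_fix; apply: (pfA _ (y (dzero k) n)).
by have := y_fix _ _ (dle0 n); rewrite /act_inf (res_vertex A).
Qed.

Lemma G_periodic_shift n x : pseudo_free A -> is_inf_path x ->
  G_periodic A x -> G_periodic A (shift n x).
Proof.
move=> pfA x_path x_per shift_aper; apply: x_per => g p q g_or_pq x_rel.
have qx_path := is_inf_path_shift q x_path.
set h := res A g (shift q x (dzero k) n).
have shift_rel : ip_eq (shift p (shift n x)) (act_inf A h (shift q (shift n x))).
  move=> a b le_ab; rewrite shiftC (ip_eq_shift n x_rel le_ab).
  by rewrite (shift_act_inf g n qx_path le_ab) shiftC.
apply: (shift_aper h p q _ shift_rel).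
case: (eqVneq p q) g_or_pq => [eq_pq [g_neq1 | //] | /eqP p_neq_q]; last by right.
left=> h1; apply: g_neq1; apply: (act_inf_fixed_res_eq1 pfA qx_path _ h1).
by rewrite -{1}eq_pq.
Qed.

End SelfSimilarShift.

Theorem lemma3p4 (k : nat) (hk : 1 <= k) (G : group) (L : kgraph k)
  (A : selfsim G L) (hpf : pseudo_free A)
  (x : inf_path L) (hx : is_inf_path x) :
  G_periodic A x <-> forall n : degk k, G_periodic A (shift n x).
Proof.
split=> [x_per n | all_per]; first exact: G_periodic_shift.
by rewrite -(shift0 x); exact: all_per.
Qed.
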